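(* Let $\mathcal I$ and $\mathcal J$ be ideals on $\omega$ and let $X$ be a nonempty normal space. The following are equivalent: (1) $|X|<\omega$ and $\mathcal I\subseteq\mathcal J$; (2) for every sequence $(f_n)$ in $\mathcal C(X)$: $\mathcal I$-pointwise convergence to $0$ implies $\mathcal J$-uniform convergence to $0$; (3) for every $(f_n)$ in $\mathcal C(X)$: $\mathcal I$-quasi-normal convergence to $0$ implies $\mathcal J$-uniform convergence to $0$; (4) for every $(f_n)$ in $\mathcal C(X)$: $\mathcal I$-$\sigma$-uniform convergence to $0$ implies $\mathcal J$-uniform convergence to $0$.
   Context: An ideal on $\omega$ is a family $\mathcal I\subseteq\mathcal P(\omega)$ closed under finite unions and subsets, containing all finite sets, with $\omega\notin\mathcal I$. A real sequence $(a_n)$ is $\mathcal I$-convergent to $0$ if $\{n:|a_n|\ge\varepsilon\}\in\mathcal I$ for all $\varepsilon>0$. For a sequence $(f_n)$ of real functions on a set $X$: $\mathcal I$-pointwise convergence to $0$ means $(f_n(x))$ is $\mathcal I$-convergent to $0$ for each $x$; $\mathcal I$-uniform means $\{n:\exists x\in X\,(|f_n(x)|\ge\varepsilon)\}\in\mathcal I$ for each $\varepsilon>0$; $\mathcal I$-$\sigma$-uniform means $X=\bigcup_{k\in\omega}X_k$ with $(f_n\restriction X_k)$ $\mathcal I$-uniformly convergent to $0$ for each $k$; $\mathcal I$-quasi-normal means there is a sequence $(\varepsilon_n)$ of positive reals $\mathcal I$-convergent to $0$ with $\{n:|f_n(x)|\ge\varepsilon_n\}\in\mathcal I$ for each $x$.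 $\mathcal C(X)$ = continuous real functions on $X$. A normal space is a Hausdorff space in which disjoint closed sets have disjoint open neighbourhoods. *)

From HB Require Import structures.
From mathcomp Require Import all_boot all_order all_algebra.
From mathcomp Require Import all_classical all_reals all_analysis.
From mathcomp Require Import Rstruct Rstruct_topology.
From Stdlib Require Import Reals.
Set Implicit Arguments. Unset Strict Implicit. Unset Printing Implicit Defensive.
Import Order.TTheory GRing.Theory Num.Theory.
Local Open Scope classical_set_scope.
Local Open Scope ring_scope.

Definition is_ideal (I : set (set nat)) : Prop :=
  [/\ (forall A B, I A -> I B -> I (A `|` B)),
      (forall A B, B `<=` A -> I A -> I B),
      (forall A, finite_set A -> I A) &
      ~ I [set: nat]].

Definition Iconv0 (I : set (set nat)) (a : nat -> R) : Prop :=
  forall eps : R, 0 < eps -> I [set n | eps <= `|a n|].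

Definition normal_T2 (X : topologicalType) : Prop :=
  hausdorff_space X /\
  forall A B : set X, closed A -> closed B -> A `&` B = set0 ->
    exists U V : set X, [/\ open U, open V, A `<=` U, B `<=` V & U `&` V = set0].

Section conv.
Variable (X : topologicalType) (I : set (set nat)).

Definition Ipointwise0 (f : nat -> X -> R) : Prop :=
  forall x, Iconv0 I (fun n => f n x).

Definition Iuniform0_on (A : set X) (f : nat -> X -> R) : Prop :=
  forall eps : R, 0 < eps -> I [set n | exists x, A x /\ eps <= `|f n x|].

Definition Iuniform0 (f : nat -> X -> R) : Prop := Iuniform0_on [set: X] f.

Definition Isigma_uniform0 (f : nat -> X -> R) : Prop :=
  exists Xk : nat -> set X,
    \bigcup_k Xk k = [set: X] /\ forall k, Iuniform0_on (Xk k) f.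

Definition Iquasi_normal0 (f : nat -> X -> R) : Prop :=
  exists e : nat -> R,
    [/\ (forall n, 0 < e n), Iconv0 I e &
        forall x, I [set n | e n <= `|f n x|]].
End conv.

From mathcomp Require Import all_boot all_order all_algebra.
From mathcomp Require Import all_classical all_reals all_analysis.
From mathcomp Require Import Rstruct Rstruct_topology.
From Stdlib Require Import Reals.
Set Implicit Arguments. Unset Strict Implicit. Unset Printing Implicit Defensive.
Import Order.TTheory GRing.Theory Num.Theory.
Local Open Scope classical_set_scope.
Local Open Scope ring_scope.

(* On a finite space, I-pointwise convergence is I-uniform, since a finite
   union of sets of I lies in I; I-quasi-normal and I-sigma-uniform convergence
   both imply I-pointwise convergence, and I <= J passes everything to J.
   Conversely, a sequence that vanishes, on each piece of a countable cover,
   outside an index set of I converges in both senses.  Two such sequences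
   suffice: the constants 1_A(n) with A in I force I <= J; and on an infinite
   normal space, Urysohn bumps supported on an infinite disjoint family of
   open sets (which exists in any infinite Hausdorff space) are pointwise
   eventually 0 yet attain 1 for every n, so J-uniform convergence would put
   omega into J. *)

Section ideal_theory.
Variable I : set (set nat).
Hypothesis hI : is_ideal I.

Lemma idealS (A B : set nat) : I A -> B `<=` A -> I B.
Proof. by case: hI => _ sub _ _ IA /sub; apply. Qed.

Lemma idealU (A B : set nat) : I A -> I B -> I (A `|` B).
Proof. by case: hI => + _ _ _; apply. Qed.

Lemma ideal_finite (A : set nat) : finite_set A -> I A.
Proof. by case: hI => _ _ + _; apply. Qed.

Lemma ideal_bigcup {T : choiceType} (D : set T) (S : T -> set nat) :
  finite_set D -> (forall x, D x -> I (S x)) -> I (\bigcup_(x in D) S x).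
Proof.
move=> /finite_seqP[s ->] IS; rewrite bigcup_seq big_seq.
apply: big_ind.
- exact/ideal_finite/finite_set0.
- exact: idealU.
- by move=> x xs; apply: IS.
Qed.

Lemma Iconv0_cvg (a : R^nat) : a @ \oo --> (0 : R) -> Iconv0 I a.
Proof.
move=> /(@cvgr0Pnorm_lt _ R^o) a0 eps /a0[N _ aN].
apply: (idealS (ideal_finite (finite_II N))) => n /= epsa.
by rewrite ltnNge; apply/negP => /aN /=; rewrite ltNge epsa.
Qed.

End ideal_theory.

Section modes_of_convergence.
Variables (X : topologicalType) (I : set (set nat)).
Hypothesis hI : is_ideal I.
Implicit Types f : nat -> X -> R.

Lemma Iquasi_normal0_pointwise f : Iquasi_normal0 I f -> Ipointwise0 I f.
Proof.
move=> [e [e0 Ie fe]] x eps eps0.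
apply: (idealS hI (idealU hI (fe x) (Ie eps eps0))) => n /= epsf.
have [efx|fxe] := leP (e n) `|f n x|; [by left | right].
by rewrite gtr0_norm // (le_trans epsf) ?ltW.
Qed.

Lemma Isigma_uniform0_pointwise f : Isigma_uniform0 I f -> Ipointwise0 I f.
Proof.
move=> [Xk [cover Ik]] x eps eps0.
have [k _ Xkx] : (\bigcup_k Xk k) x by rewrite cover.
by apply: (idealS hI (Ik k eps eps0)) => n; exists x.
Qed.

Lemma Ipointwise0_uniform0_finite f :
  finite_set [set: X] -> Ipointwise0 I f -> Iuniform0 I f.
Proof.
move=> finX fI eps eps0.
apply: (idealS hI (ideal_bigcup hI finX (fun x _ => fI x eps eps0))).
by move=> n [x [_ epsf]]; exists x.
Qed.

Definition Isigma_vanishing f :=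
  exists Xk : nat -> set X, \bigcup_k Xk k = [set: X] /\
    forall k, I [set n | exists x, Xk k x /\ f n x != 0].

Lemma Isigma_vanishing_quasi_normal0 f : Isigma_vanishing f -> Iquasi_normal0 I f.
Proof.
move=> [Xk [cover Ik]]; exists harmonic; split.
- exact: harmonic_gt0.
- exact/(Iconv0_cvg hI)/cvg_harmonic.
- move=> x; have [k _ Xkx] : (\bigcup_k Xk k) x by rewrite cover.
  apply: (idealS hI (Ik k)) => n /= hf; exists x; split => //.
  by apply: contraTneq hf => ->; rewrite normr0 -ltNge harmonic_gt0.
Qed.

Lemma Isigma_vanishing_uniform0 f : Isigma_vanishing f -> Isigma_uniform0 I f.
Proof.
move=> [Xk [cover Ik]]; exists Xk; split => // k eps eps0.
apply: (idealS hI (Ik k)) => n [x [Xkx epsf]]; exists x; split => //.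
by apply: contraTneq epsf => ->; rewrite normr0 -ltNge.
Qed.

Lemma eventually0_Isigma_vanishing f :
  (forall x, exists N : nat, forall n, (N <= n)%nat -> f n x = 0) ->
  Isigma_vanishing f.
Proof.
move=> f0; exists (fun k => [set x | forall n, (k <= n)%nat -> f n x = 0]); split.
  by apply/seteqP; split => // x _; have [N fN] := f0 x; exists N.
move=> k; apply: (idealS hI (ideal_finite hI (finite_II k))) => n [x [fk]] /=.
by rewrite ltnNge; apply: contraNN => kn; rewrite fk.
Qed.

Lemma indic_Isigma_vanishing (A : set nat) :
  I A -> Isigma_vanishing (fun n _ => \1_A n).
Proof.
move=> IA; exists (fun=> [set: X]); split; first by rewrite bigcup_const.
move=> _; apply: (idealS hI IA) => n [_ [_]].
by rewrite indicE; case: (boolP (n \in A)) => [/set_mem|] //; rewrite eqxx.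
Qed.

End modes_of_convergence.

Lemma trivIset_of_split {T : Type} (good piece : set T -> Prop) (W0 : set T) :
  good W0 ->
  (forall W, good W -> exists U W',
     [/\ piece U, U `<=` W, good W', W' `<=` W & U `&` W' = set0]) ->
  exists U : nat -> set T, (forall n, piece (U n)) /\ trivIset setT U.
Proof.
move=> goodW0 splitW.
have /choice[g gP] : forall W, exists p : set T * set T, good W ->
    [/\ piece p.1, p.1 `<=` W, good p.2, p.2 `<=` W & p.1 `&` p.2 = set0].
  move=> W; have [/splitW[U [W' UW']]|Wbad] := pselect (good W).
    by exists (U, W').
  by exists (set0, set0) => /Wbad.
pose Ws n := iter n (fun W => (g W).2) W0.
have goodWs n : good (Ws n) by elim: n => //= n /gP[].
have WsS n k : Ws (k + n)%nat `<=` Ws n.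
  elim: k => //= k IHk; apply: subset_trans IHk.
  by have [] := gP _ (goodWs (k + n)%nat).
exists (fun n => (g (Ws n)).1); split=> [n|]; first by have [] := gP _ (goodWs n).
have disj n m : (n < m)%nat -> (g (Ws n)).1 `&` (g (Ws m)).1 = set0.
  move=> nm; have [_ _ _ _ Unm] := gP _ (goodWs n); have [_ Um _ _ _] := gP _ (goodWs m).
  rewrite setIC; apply/disjoints_subset => x /Um; rewrite -(subnK nm) => /WsS W'x Ux.
  by move/disjoints_subset: Unm => /(_ x Ux).
move=> n m _ _; have [/disj->|/disj|//] := ltngtP n m; first by case.
by rewrite setIC => ->; case.
Qed.

Lemma hausdorff_infinite_open_split (X : topologicalType) (W : set X) :
  hausdorff_space X -> open W /\ infinite_set W ->
  exists U W', [/\ open U /\ U !=set0, U `<=` W,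
    open W' /\ infinite_set W', W' `<=` W & U `&` W' = set0].
Proof.
move=> hX [oW infW].
have closed_finite := accessible_finite_set_closed.1 (hausdorff_accessible hX).
have openWD C : closed C -> open (W `\` C).
  by move=> clC; rewrite setDE; apply/openI/closed_openC.
have [a Wa] := infinite_setN0 infW.
have [b [Wb /= ba]] := infinite_setN0 (infinite_setD infW (finite_set1 a)).
have ab : a != b by apply/eqP => ab; apply: ba.
move: hX; rewrite open_hausdorff => /(_ a b ab)[[U V] [/= /set_mem Ua /set_mem Vb]].
move=> [oU oV /eqP UV0].
have clUV : closure U `<=` ~` V.
  have -> : ~` V = closure (~` V) by apply/closure_id; rewrite closedC.
  exact/closureS/disjoints_subset.
have [finWD|infWD] := pselect (finite_set (W `\` closure U)).
- have finWV : finite_set (W `&` V).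
    by apply: sub_finite_set finWD => x [Wx Vx]; split => // /clUV.
  exists (W `&` V), (W `\` (W `&` V)); split.
  + by split; [exact: openI | exists b].
  + exact: subIsetl.
  + by split; [exact: openWD (closed_finite _ finWV) | exact: infinite_setD].
  + exact: subDsetl.
  + by apply/disjoints_subset => x WVx [_ /(_ WVx)].
- exists (W `&` U), (W `\` closure U); split.
  + by split; [exact: openI | exists a].
  + exact: subIsetl.
  + by split; [exact/openWD/closed_closure | exact: infWD].
  + exact: subDsetl.
  + by apply/disjoints_subset => x [_ /subset_closure Ux] [_ /(_ Ux)].
Qed.

Lemma hausdorff_infinite_trivIset_open (X : topologicalType) :
  hausdorff_space X -> infinite_set [set: X] ->
  exists U : nat -> set X, (forall n, open (U n) /\ U n !=set0) /\ trivIset setT U.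
Proof.
move=> hX infX; apply: (@trivIset_of_split _ (fun W => open W /\ infinite_set W)
  (fun U => open U /\ U !=set0) setT).
  by split; first exact: openT.
by move=> W; exact: hausdorff_infinite_open_split.
Qed.

Lemma normal_hausdorff_infinite_bumps (X : topologicalType) :
  normal_space X -> hausdorff_space X -> infinite_set [set: X] ->
  exists f : nat -> X -> R, [/\ forall n, continuous (f n),
    forall x, exists N : nat, forall n, (N <= n)%nat -> f n x = 0
    & forall n, exists x, f n x = 1].
Proof.
move=> nX hX /(hausdorff_infinite_trivIset_open hX)[U [oU trivU]].
have /choice[xs Uxs] : forall n, exists x, U n x by move=> n; case: (oU n).
have sepU n : uniform_separator (~` U n) [set xs n].
  apply: ((@normal_separatorP R X).1 nX).
  - by apply: open_closedC; case: (oU n).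
  - exact/accessible_closed_set1/hausdorff_accessible.
  - by apply/disjoints_subset => x nUx /= xE; apply: nUx; rewrite xE.
exists (fun n => Urysohn (~` U n) [set xs n]); split => [n|x|n].
- exact: Urysohn_continuous.
- suff [N UN] : exists N : nat, forall n, (N <= n)%nat -> ~ U n x.
    by exists N => n /UN nUx; apply: (Urysohn_sub0 (sepU n)); exists x.
  have [[m _ Umx]|] := pselect ((\bigcup_m U m) x); last first.
    by move=> nUx; exists 0%nat => n _ Unx; apply: nUx; exists n.
  exists m.+1 => n mn Unx; have nm : n = m by apply: trivU => //; exists x.
  by rewrite nm ltnn in mn.
- by exists (xs n); apply: (Urysohn_sub1 (sepU n)); exists (xs n).
Qed.

Section necessity.
Variables (I J : set (set nat)) (X : topologicalType).
Hypotheses (hI : is_ideal I) (hJ : is_ideal J).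
Hypothesis vanishing_uniform : forall f : nat -> X -> R,
  (forall n, continuous (f n)) -> Isigma_vanishing I f -> Iuniform0 J f.

Lemma finite_of_vanishing_uniform : normal_T2 X -> finite_set [set: X].
Proof.
move=> [hX /(@normal_openP R X).2 nX]; apply: contrapT => infX.
have [f [cf f0 f1]] := normal_hausdorff_infinite_bumps nX hX infX.
have /(_ 1 ltr01) Jf := vanishing_uniform cf (eventually0_Isigma_vanishing hI f0).
case: hJ => _ _ _; apply; apply: (idealS hJ Jf) => n _.
by have [x fx1] := f1 n; exists x; rewrite fx1 normr1.
Qed.

Lemma subset_of_vanishing_uniform : [set: X] !=set0 -> I `<=` J.
Proof.
move=> [x0 _] A IA.
have /(_ 1 ltr01) := vanishing_uniform (fun n => @cst_continuous X R _)
  (indic_Isigma_vanishing X hI IA).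
by move/(idealS hJ); apply=> n An; exists x0; rewrite indicE mem_set // normr1.
Qed.

End necessity.

Theorem proposition3p3 (I J : set (set nat)) (X : topologicalType)
  (hI : is_ideal I) (hJ : is_ideal J)
  (hXne : [set: X] !=set0) (hXn : normal_T2 X) :
  let C := fun f : nat -> X -> R => forall n, continuous (f n) in
  let P1 := finite_set [set: X] /\ I `<=` J in
  let P2 := forall f, C f -> Ipointwise0 I f -> Iuniform0 J f in
  let P3 := forall f, C f -> Iquasi_normal0 I f -> Iuniform0 J f in
  let P4 := forall f, C f -> Isigma_uniform0 I f -> Iuniform0 J f in
  (P1 <-> P2) /\ (P1 <-> P3) /\ (P1 <-> P4).
Proof.
move=> C P1 P2 P3 P4.
have P12 : P1 -> P2.
  by move=> [finX IJ] f _ /(Ipointwise0_uniform0_finite hI finX) fI eps /fI/IJ.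
have P23 : P2 -> P3 by move=> P f cf /(Iquasi_normal0_pointwise hI); apply: P.
have P24 : P2 -> P4 by move=> P f cf /(Isigma_uniform0_pointwise hI); apply: P.
have vanishing_P1 : (forall f, C f -> Isigma_vanishing I f -> Iuniform0 J f) -> P1.
  move=> van; split; first exact: finite_of_vanishing_uniform van hXn.
  exact: subset_of_vanishing_uniform van hXne.
have P31 : P3 -> P1.
  by move=> P; apply: vanishing_P1 => f cf /(Isigma_vanishing_quasi_normal0 hI)/(P f cf).
have P41 : P4 -> P1.
  by move=> P; apply: vanishing_P1 => f cf /(Isigma_vanishing_uniform0 hI)/(P f cf).
by split; [|split]; split; auto.
Qed.
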